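(* Let $\mathcal{S}$ be a sound saturation system and let $\mathcal{C}$ be one of the clause sets $\mathcal{X}_m$ or $\mathcal{Y}_{m,n}$ with natural numbers $0<n<m$. Then $\mathcal{S}+\mathrm{IND}^R_{\mathrm{PF}}(\mathrm{Open}(L(\mathcal{C})))$ does not refute $\mathcal{C}$.
   Context: Language of linear arithmetic $\{0/0,s/1,p/1,+/2\}$. $\mathcal{T}$ has axioms (universally closed) $0\neq s(x)$, $p(0)=0$, $p(s(x))=x$, $x+0=x$, $x+s(y)=s(x+y)$; $\mathcal{T}'$ is $\mathcal{T}$ plus $x\neq0\to x=s(p(x))$, $x+y=y+x$, $(x+y)+z=x+(y+z)$, $x+y=x+z\to y=z$. For $m\in\mathbb{N}$ and a term $t$, $m\cdot t$ is $t+(t+\cdots+(t+t)\cdots)$ ($m$ copies) and $s^n$ is $n$-fold $s$. $C_m=\forall x,y(m\cdot x=m\cdot y\to x=y)$, $D_{m,n}=\forall x,y\,(s^n(m\cdot x)\neq m\cdot y)$. $\mathcal{X}_m=\mathit{CNF}(\mathit{sk}^\exists(\mathcal{T}'+\neg C_m))$, $\mathcal{Y}_{m,n}=\mathit{CNF}(\mathit{sk}^\exists(\mathcal{T}'+\neg D_{m,n}))$, where $\mathit{sk}^\exists$ is existential Skolemization with canonical Skolem symbols (a strong quantifier $QxA$ with free variables $\vec y$ is replaced by $\mathfrak{s}_{QxA}(\vec y)$, a new function symbol indexed by $QxA$; here only new constants arise) and $\mathit{CNF}$ gives clause sets of conjunctive normal forms. $L(\mathcal{C})$ = symbols occurring in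 $\mathcal{C}$; $\mathrm{Open}(L)$ = quantifier-free $L$ formulas. $I_x\varphi=\forall\vec z(\varphi(0,\vec z)\wedge\forall x(\varphi(x,\vec z)\to\varphi(s(x),\vec z))\to\forall x\varphi(x,\vec z))$. Saturation systems: sets of rules $\mathcal{C}/\mathcal{D}$ ($\mathcal{C}$ clause set, $\mathcal{D}$ finite clause set), $+$ = union; a deduction from $\mathcal{C}_0$ is $\mathcal{D}_0=\mathcal{C}_0,\dots,\mathcal{D}_k$ with $\mathcal{D}_{i+1}=\mathcal{D}_i\cup\mathcal{B}_i$ for a rule $\mathcal{D}_i/\mathcal{B}_i$; a refutation has the empty clause in $\mathcal{D}_k$. Sound: any clause $C$ derivable from $\mathcal{C}_0$ has $L(C)\subseteq L(\mathcal{C}_0)$ and $\mathcal{C}_0\models C$. $\mathrm{IND}^R_{\mathrm{PF}}(\Gamma)$ is the set of rules $\mathcal{C}'/\mathit{CNF}(\mathit{sk}^\exists(I_x\varphi(x,\vec t)))$ for every clause set $\mathcal{C}'$, every $\varphi(x,\vec z)\in\Gamma$ and every vector $\vec t$ of ground $L(\mathcal{C}')$ terms. *)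

From Stdlib Require Import List Arith PeanoNat.
Import ListNotations.

(** Function symbols: 0, s, p, + and canonical Skolem symbols
    [Sk A] indexed by the (strong) quantified formula [A] = QxB they replace. *)
Inductive sym : Type :=
  | SZero | SSucc | SPred | SPlus
  | Sk (A : form)
with term : Type :=
  | Var (n : nat)
  | App (f : sym) (args : list term)
with form : Type :=
  | Eq (t u : term)
  | Neg (A : form)
  | And (A B : form)
  | Or (A B : form)
  | Imp (A B : form)
  | All (x : nat) (A : form)
  | Ex (x : nat) (A : form).

Definition zero : term := App SZero [].
Definition succ (t : term) : term := App SSucc [t].
Definition pred (t : term) : term := App SPred [t].
Definition plus (t u : term) : term := App SPlus [t; u].

Fixpoint tvars (t : term) : list nat :=
  match t with
  | Var n => [n]
  | App _ args => (fix go (l : list term) := match l with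
                     | [] => [] | a :: l' => tvars a ++ go l' end) args
  end.

(** symbols occurring in a term (the index of a Skolem symbol is not looked into) *)
Fixpoint tsyms (t : term) : list sym :=
  match t with
  | Var _ => []
  | App f args => f :: (fix go (l : list term) := match l with
                     | [] => [] | a :: l' => tsyms a ++ go l' end) args
  end.

Fixpoint tsubst (s : nat -> term) (t : term) : term :=
  match t with
  | Var n => s n
  | App f args => App f (map (tsubst s) args)
  end.

Definition upd (s : nat -> term) (x : nat) (t : term) : nat -> term :=
  fun y => if Nat.eqb y x then t else s y.

Fixpoint fsubst (s : nat -> term) (A : form) : form :=
  match A with
  | Eq t u => Eq (tsubst s t) (tsubst s u)
  | Neg B => Neg (fsubst s B)
  | And B C => And (fsubst s B) (fsubst s C)
  | Or B C => Or (fsubst s B) (fsubst s C)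
  | Imp B C => Imp (fsubst s B) (fsubst s C)
  | All x B => All x (fsubst (upd s x (Var x)) B)
  | Ex x B => Ex x (fsubst (upd s x (Var x)) B)
  end.

Fixpoint fv_raw (A : form) : list nat :=
  match A with
  | Eq t u => tvars t ++ tvars u
  | Neg B => fv_raw B
  | And B C | Or B C | Imp B C => fv_raw B ++ fv_raw C
  | All x B | Ex x B => filter (fun y => negb (Nat.eqb y x)) (fv_raw B)
  end.

Fixpoint undup (l : list nat) : list nat :=
  match l with
  | [] => []
  | a :: l' => if existsb (Nat.eqb a) l' then undup l' else a :: undup l'
  end.

Definition fv (A : form) : list nat := undup (fv_raw A).

Fixpoint allvars (A : form) : list nat :=
  match A with
  | Eq t u => tvars t ++ tvars u
  | Neg B => allvars B
  | And B C | Or B C | Imp B C => allvars B ++ allvars C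
  | All x B | Ex x B => x :: allvars B
  end.

Definition maxvar (A : form) : nat := fold_right Nat.max 0 (allvars A).

Fixpoint fsyms (A : form) : list sym :=
  match A with
  | Eq t u => tsyms t ++ tsyms u
  | Neg B => fsyms B
  | And B C | Or B C | Imp B C => fsyms B ++ fsyms C
  | All _ B | Ex _ B => fsyms B
  end.

Definition arity (f : sym) : nat :=
  match f with
  | SZero => 0 | SSucc => 1 | SPred => 1 | SPlus => 2
  | Sk A => length (fv A)
  end.

Fixpoint wf_term (t : term) : Prop :=
  match t with
  | Var _ => True
  | App f args => length args = arity f /\
      (fix go (l : list term) := match l with
         | [] => True | a :: l' => wf_term a /\ go l' end) args
  end.

Fixpoint wf_form (A : form) : Prop :=
  match A with
  | Eq t u => wf_term t /\ wf_term u
  | Neg B => wf_form B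
  | And B C | Or B C | Imp B C => wf_form B /\ wf_form C
  | All _ B | Ex _ B => wf_form B
  end.

Fixpoint quantifier_free (A : form) : Prop :=
  match A with
  | Eq _ _ => True
  | Neg B => quantifier_free B
  | And B C | Or B C | Imp B C => quantifier_free B /\ quantifier_free C
  | All _ _ | Ex _ _ => False
  end.

(** * Existential Skolemization [sk^∃] (for formulas asserted as axioms,
    i.e. satisfiability-preserving).  [sk pos env k A] processes [A] occurring
    with polarity [pos]; [env] is the current substitution for variables bound
    by outer quantifiers, [k] the next fresh variable.  Strong quantifiers
    (∃ positive, ∀ negative) QxB are replaced by [Sk QxB'(ys)] where QxB' is the
    current instance of the subformula and ys its free variables; weak ones
    are replaced by fresh variables (universally read in the clauses). *)
Fixpoint sk (pos : bool) (env : nat -> term) (k : nat) (A : form) : form * nat :=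
  match A with
  | Eq t u => let e := Eq (tsubst env t) (tsubst env u) in
              (if pos then e else Neg e, k)
  | Neg B => sk (negb pos) env k B
  | And B C => let (b, k1) := sk pos env k B in
               let (c, k2) := sk pos env k1 C in
               (if pos then And b c else Or b c, k2)
  | Or B C => let (b, k1) := sk pos env k B in
              let (c, k2) := sk pos env k1 C in
              (if pos then Or b c else And b c, k2)
  | Imp B C => let (b, k1) := sk (negb pos) env k B in
               let (c, k2) := sk pos env k1 C in
               (if pos then Or b c else And b c, k2)
  | All x B =>
      if pos then sk pos (upd env x (Var k)) (S k) B
      else let idx := fsubst env (All x B) in
           sk pos (upd env x (App (Sk idx) (map Var (fv idx)))) k B
  | Ex x B =>
      if pos then
        let idx := fsubst env (Ex x B) in
        sk pos (upd env x (App (Sk idx) (map Var (fv idx)))) k B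
      else sk pos (upd env x (Var k)) (S k) B
  end.

Inductive literal : Type := Lit (positive : bool) (t u : term).
Definition clause := list literal.
Definition clause_set := clause -> Prop.

(** CNF of a quantifier-free NNF formula (the output of [sk]) by
    distribution; other shapes never occur. *)
Fixpoint cnf (A : form) : list clause :=
  match A with
  | Eq t u => [[Lit true t u]]
  | Neg (Eq t u) => [[Lit false t u]]
  | And B C => cnf B ++ cnf C
  | Or B C => flat_map (fun c1 => map (fun c2 => c1 ++ c2) (cnf C)) (cnf B)
  | _ => []
  end.

Definition cnf_sk (A : form) : list clause :=
  cnf (fst (sk true Var (S (maxvar A)) A)).

Definition cnf_sk_theory (G : list form) : clause_set :=
  fun c => In c (flat_map cnf_sk G).

Definition lsyms (l : literal) : list sym :=
  match l with Lit _ t u => tsyms t ++ tsyms u end.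
Definition csyms (c : clause) : list sym := flat_map lsyms c.

Definition inL (C : clause_set) (f : sym) : Prop :=
  exists c, C c /\ In f (csyms c).

(** * Semantics: structures interpret every symbol (as a function on lists of
    arguments; for well-formed terms only the arity-many case matters);
    clauses are read universally closed. *)
Fixpoint teval {D : Type} (I : sym -> list D -> D) (rho : nat -> D) (t : term) : D :=
  match t with
  | Var n => rho n
  | App f args => I f (map (teval I rho) args)
  end.

Definition lit_sat {D : Type} (I : sym -> list D -> D) (rho : nat -> D) (l : literal) : Prop :=
  match l with
  | Lit true t u => teval I rho t = teval I rho u
  | Lit false t u => teval I rho t <> teval I rho u
  end.

Definition clause_sat {D : Type} (I : sym -> list D -> D) (c : clause) : Prop :=
  forall rho : nat -> D, exists l, In l c /\ lit_sat I rho l.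

Definition entails (C0 : clause_set) (c : clause) : Prop :=
  forall (D : Type) (I : sym -> list D -> D),
    (forall c0, C0 c0 -> clause_sat I c0) -> clause_sat I c.

(** * Saturation systems: sets of rules C/D (C clause set, D finite clause set) *)
Definition sat_system := clause_set -> list clause -> Prop.

Definition set_eq (A B : clause_set) : Prop := forall c, A c <-> B c.

Definition sys_union (S1 S2 : sat_system) : sat_system :=
  fun P B => S1 P B \/ S2 P B.

Definition step (S : sat_system) (Di Dj : clause_set) : Prop :=
  exists P B, S P B /\ set_eq P Di /\ set_eq Dj (fun c => Di c \/ In c B).

Definition deduction (S : sat_system) (C0 : clause_set)
  (Ds : nat -> clause_set) (k : nat) : Prop :=
  set_eq (Ds 0) C0 /\ forall i, i < k -> step S (Ds i) (Ds (Datatypes.S i)).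

Definition derivable (S : sat_system) (C0 : clause_set) (c : clause) : Prop :=
  exists Ds k, deduction S C0 Ds k /\ Ds k c.

Definition refutes (S : sat_system) (C0 : clause_set) : Prop :=
  derivable S C0 [].

Definition sound (S : sat_system) : Prop :=
  forall C0 c, derivable S C0 c ->
    (forall f, In f (csyms c) -> inL C0 f) /\ entails C0 c.

Definition Open (C : clause_set) : form -> Prop :=
  fun A => quantifier_free A /\ wf_form A /\ (forall f, In f (fsyms A) -> inL C f).

Definition ground_L_term (C : clause_set) (t : term) : Prop :=
  wf_term t /\ tvars t = [] /\ (forall f, In f (tsyms t) -> inL C f).

(** I_x A for A with only x free (the vector z already instantiated) *)
Definition Ind (x : nat) (A : form) : form :=
  Imp (And (fsubst (upd Var x zero) A)
           (All x (Imp A (fsubst (upd Var x (succ (Var x))) A))))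
      (All x A).

(** rule C'/CNF(sk^∃(I_x φ(x, t))) for φ(x, z) ∈ Γ, t ground L(C') terms
    (ts y is the ground term substituted for the parameter y ≠ x of φ) *)
Definition IND (G : form -> Prop) : sat_system :=
  fun P B => exists (phi : form) (x : nat) (ts : nat -> term),
    G phi /\
    (forall y, In y (fv phi) -> y <> x -> ground_L_term P (ts y)) /\
    B = cnf_sk (Ind x (fsubst (fun y => if Nat.eqb y x then Var x else ts y) phi)).

Definition vx := Var 0.
Definition vy := Var 1.
Definition vz := Var 2.

(** m·t = t+(t+⋯+(t+t)⋯) (m copies; only used for m ≥ 1) *)
Fixpoint mult (m : nat) (t : term) : term :=
  match m with
  | 0 => zero
  | Datatypes.S m' => match m' with 0 => t | _ => plus t (mult m' t) end
  end.

Fixpoint sN (n : nat) (t : term) : term :=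
  match n with 0 => t | Datatypes.S n' => succ (sN n' t) end.

Definition neq (t u : term) : form := Neg (Eq t u).

Definition theory_T : list form :=
  [ All 0 (neq zero (succ vx));
    Eq (pred zero) zero;
    All 0 (Eq (pred (succ vx)) vx);
    All 0 (Eq (plus vx zero) vx);
    All 0 (All 1 (Eq (plus vx (succ vy)) (succ (plus vx vy)))) ].

Definition theory_T' : list form :=
  theory_T ++
  [ All 0 (Imp (neq vx zero) (Eq vx (succ (pred vx))));
    All 0 (All 1 (Eq (plus vx vy) (plus vy vx)));
    All 0 (All 1 (All 2 (Eq (plus (plus vx vy) vz) (plus vx (plus vy vz)))));
    All 0 (All 1 (All 2 (Imp (Eq (plus vx vy) (plus vx vz)) (Eq vy vz)))) ].

Definition C_ (m : nat) : form :=
  All 0 (All 1 (Imp (Eq (mult m vx) (mult m vy)) (Eq vx vy))).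

Definition D_ (m n : nat) : form :=
  All 0 (All 1 (neq (sN n (mult m vx)) (mult m vy))).

Definition X_ (m : nat) : clause_set := cnf_sk_theory (theory_T' ++ [Neg (C_ m)]).
Definition Y_ (m n : nat) : clause_set := cnf_sk_theory (theory_T' ++ [Neg (D_ m n)]).

(* It suffices to exhibit a structure satisfying the clauses of C in which every rule
   of S + IND^R_PF(Open(L(C))) preserves truth: then the empty clause is never derived.
   For S this is soundness.  For the induction rules, interpret every Skolem symbol by a
   witness of the formula indexing it, with the remaining variables at a default value.
   This makes CNF(sk^∃(A)) true whenever A is a true sentence in which no strong
   quantifier lies in the scope of a weak one, which covers T', ¬C_m, ¬D_{m,n} and every
   I_x φ(x, t) with φ open and t ground; so it remains to satisfy T', ¬C_m, ¬D_{m,n} and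
   open induction.

   Take the naturals, with n encoded as n·m, extended by chains (u, j, t) with u ∈ ℤ,
   level j ≥ 1 and torsion t ∈ ℤ/m, successor adding m to u and addition componentwise.
   This is a model of T' in which m·(0,1,0) = m·(0,1,1) and s^n(m·(0,1,0)) = m·(n,1,0).
   Every term in one variable x is, outside a bounded box of values of (u, j), an affine
   function of x, so an open formula in x is eventually true or eventually false.  If it
   holds at 0 and is preserved by s, it holds on all naturals and so is not eventually
   false; being eventually true, it holds on each chain, because predecessors along a
   chain eventually leave every box. *)

From Stdlib Require Import List PeanoNat ZArith Lia Classical ClassicalEpsilon Eqdep_dec.
Import ListNotations.

Fixpoint term_nested_ind (P : term -> Prop) (HV : forall n, P (Var n))
  (HA : forall f args, Forall P args -> P (App f args)) (t : term) : P t :=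
  match t with
  | Var n => HV n
  | App f args => HA f args
      ((fix go (l : list term) : Forall P l := match l with
        | [] => Forall_nil _
        | a :: l' => Forall_cons _ (term_nested_ind P HV HA a) (go l') end) args)
  end.

Lemma tvars_App f args : tvars (App f args) = flat_map tvars args.
Proof. induction args as [|a args IH]; simpl in *; congruence. Qed.

Lemma tvars_tsubst s t n :
  In n (tvars (tsubst s t)) -> exists y, In y (tvars t) /\ In n (tvars (s y)).
Proof.
  induction t as [y|f args IH] using term_nested_ind; [now exists y; split; [left|]|].
  cbn [tsubst]; rewrite !tvars_App, flat_map_concat_map, map_map, <- flat_map_concat_map.
  intros [a [Ha Hn]]%in_flat_map.
  destruct (proj1 (Forall_forall _ _) IH a Ha Hn) as [y [Hy Hny]].
  exists y; split; [apply in_flat_map; eauto | exact Hny].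
Qed.

Lemma tvars_mult m t n : In n (tvars (mult m t)) -> In n (tvars t).
Proof.
  induction m as [|[|m] IH]; simpl; [tauto|auto|].
  rewrite app_nil_r; intros [H|H]%in_app_or; auto.
Qed.

Lemma tvars_sN k t n : In n (tvars (sN k t)) -> In n (tvars t).
Proof. induction k; simpl; [auto|rewrite app_nil_r; auto]. Qed.

Lemma undup_In l n : In n (undup l) <-> In n l.
Proof.
  induction l as [|a l IH]; simpl; [tauto|].
  destruct (existsb (Nat.eqb a) l) eqn:E; simpl; rewrite IH; [|tauto].
  apply existsb_exists in E as [y [Hy ->%Nat.eqb_eq]]; intuition congruence.
Qed.

Lemma fv_raw_fsubst_qf A s n : quantifier_free A ->
  In n (fv_raw (fsubst s A)) -> exists y, In y (fv_raw A) /\ In n (tvars (s y)).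
Proof.
  induction A; simpl; try tauto.
  1: intros _ [H|H]%in_app_or; destruct (tvars_tsubst _ _ _ H) as [y [Hy Hn]];
       exists y; rewrite in_app_iff; tauto.
  all: intros [QA QB] [H|H]%in_app_or;
    [destruct (IHA1 QA H) as [y Hy]|destruct (IHA2 QB H) as [y Hy]];
    exists y; rewrite in_app_iff; tauto.
Qed.

Lemma fsubst_qf A s : quantifier_free A -> quantifier_free (fsubst s A).
Proof. induction A; simpl; tauto. Qed.

Lemma fv_raw_instance phi x ts : quantifier_free phi ->
  (forall y, In y (fv phi) -> y <> x -> tvars (ts y) = []) ->
  forall n, In n (fv_raw (fsubst (fun y => if Nat.eqb y x then Var x else ts y) phi)) -> n = x.
Proof.
  intros Q Hts n Hn; destruct (fv_raw_fsubst_qf _ _ _ Q Hn) as [y [Hy Hny]].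
  destruct (Nat.eqb_spec y x) as [->|Hyx]; [destruct Hny as [->|[]]; auto|].
  rewrite Hts in Hny by (auto; apply undup_In; auto); contradiction.
Qed.

Fixpoint nnf (F : form) : Prop :=
  match F with
  | Eq _ _ | Neg (Eq _ _) => True
  | And B C | Or B C => nnf B /\ nnf C
  | _ => False
  end.

Ltac sk_split IH1 IH2 :=
  match goal with |- context [sk ?p ?e ?i ?B] =>
    pose proof (IH1 p e i) as I1; destruct (sk p e i B) as [b k1] end;
  match goal with |- context [sk ?p ?e ?i ?C] =>
    pose proof (IH2 p e i) as I2; destruct (sk p e i C) as [c k2] end.

Lemma sk_nnf A : forall pos env k, nnf (fst (sk pos env k A)).
Proof.
  induction A; intros pos env k; simpl.
  1: destruct pos; simpl; auto.
  1: apply IHA.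
  1-3: sk_split IHA1 IHA2; destruct pos; simpl in *; auto.
  all: destruct pos; apply IHA.
Qed.

Fixpoint weak_only (pos : bool) (A : form) : Prop :=
  match A with
  | Eq _ _ => True
  | Neg B => weak_only (negb pos) B
  | And B C | Or B C => weak_only pos B /\ weak_only pos C
  | Imp B C => weak_only (negb pos) B /\ weak_only pos C
  | All _ B => pos = true /\ weak_only pos B
  | Ex _ B => pos = false /\ weak_only pos B
  end.

Fixpoint strong_first (pos : bool) (A : form) : Prop :=
  match A with
  | Eq _ _ => True
  | Neg B => strong_first (negb pos) B
  | And B C | Or B C => strong_first pos B /\ strong_first pos C
  | Imp B C => strong_first (negb pos) B /\ strong_first pos C
  | All _ B => if pos then weak_only pos B else strong_first pos B
  | Ex _ B => if pos then strong_first pos B else weak_only pos B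
  end.

Lemma weak_only_qf A pos : quantifier_free A -> weak_only pos A.
Proof. revert pos; induction A; simpl; intuition. Qed.

Lemma strong_first_qf A pos : quantifier_free A -> strong_first pos A.
Proof. revert pos; induction A; simpl; intuition. Qed.

Lemma fv_raw_Ind x A : quantifier_free A -> (forall n, In n (fv_raw A) -> n = x) ->
  fv_raw (Ind x A) = [].
Proof.
  intros Q Hx; apply incl_l_nil; intros n Hn; simpl in Hn.
  assert (Hsub : forall t, In n (fv_raw (fsubst (upd Var x t) A)) -> In n (tvars t)).
  { intros t Ht; destruct (fv_raw_fsubst_qf _ _ _ Q Ht) as [y [Hy Hny]].
    rewrite (Hx y Hy) in Hny; unfold upd in Hny; rewrite Nat.eqb_refl in Hny; exact Hny. }
  rewrite !in_app_iff, !filter_In, !in_app_iff, Bool.negb_true_iff, Nat.eqb_neq in Hn.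
  destruct Hn as [[H|[[H|H] Hnx]]|[H Hnx]].
  - exact (Hsub zero H).
  - destruct (Hnx (Hx n H)).
  - destruct (Hsub _ H) as [->|[]]; contradiction.
  - destruct (Hnx (Hx n H)).
Qed.

Lemma strong_first_Ind x A : quantifier_free A -> strong_first true (Ind x A).
Proof.
  intro Q; simpl; repeat split;
    auto using strong_first_qf, weak_only_qf, fsubst_qf.
Qed.

Lemma fv_raw_All0_All1 B : incl (fv_raw B) [0; 1] -> fv_raw (All 0 (All 1 B)) = [].
Proof.
  intro H; apply incl_l_nil; intros n Hn; simpl in Hn.
  rewrite !filter_In, !Bool.negb_true_iff, !Nat.eqb_neq in Hn.
  destruct Hn as [[Hn H1] H0]; destruct (H n Hn) as [|[|[]]]; congruence.
Qed.

Lemma fv_raw_C m : fv_raw (C_ m) = [].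
Proof.
  apply fv_raw_All0_All1; intros n H; simpl in H; rewrite !in_app_iff in H.
  destruct H as [[H|H]|H]; try apply tvars_mult in H; simpl in *; tauto.
Qed.

Lemma fv_raw_D m k : fv_raw (D_ m k) = [].
Proof.
  apply fv_raw_All0_All1; intros n H; simpl in H; rewrite !in_app_iff in H.
  destruct H as [H|H]; [apply tvars_sN in H|]; apply tvars_mult in H; simpl in *; tauto.
Qed.

Lemma theory_T'_shape A : In A theory_T' -> fv_raw A = [] /\ strong_first true A.
Proof.
  intro H; repeat (destruct H as [<-|H]; [split; [reflexivity|simpl; tauto]|]); destruct H.
Qed.

(** * Refutations and models *)

Definition sat_preserving (S : sat_system) {D : Type} (I : sym -> list D -> D) : Prop :=
  forall P B, S P B -> (forall c, P c -> clause_sat I c) -> forall c, In c B -> clause_sat I c.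

Lemma sat_preserving_union S1 S2 {D} (I : sym -> list D -> D) :
  sat_preserving S1 I -> sat_preserving S2 I -> sat_preserving (sys_union S1 S2) I.
Proof. intros H1 H2 P B [HB|HB]; [apply H1|apply H2]; auto. Qed.

Lemma sound_sat_preserving S {D} (I : sym -> list D -> D) : sound S -> sat_preserving S I.
Proof.
  intros HS P B HB HP c Hc.
  assert (Hder : derivable S P c).
  { exists (fun i => match i with 0 => P | _ => fun c => P c \/ In c B end), 1.
    split; [split; [intro; tauto|]|right; exact Hc].
    intros i Hi; replace i with 0 by lia; exists P, B; repeat split; tauto. }
  exact (proj2 (HS P c Hder) D I HP).
Qed.

Lemma not_refutes_of_model S C0 {D} (d : D) (I : sym -> list D -> D) :
  sat_preserving S I -> (forall c, C0 c -> clause_sat I c) -> ~ refutes S C0.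
Proof.
  intros HS HC [Ds [k [[H0 Hstep] Hk]]].
  assert (Hsat : forall i, i <= k -> forall c, Ds i c -> clause_sat I c).
  { induction i as [|i IH]; intros Hi c Hc; [apply HC, H0, Hc|].
    destruct (Hstep i Hi) as [P [B [HB [HP HD]]]].
    apply HD in Hc as [Hc|Hc]; [apply IH; auto; lia|].
    apply (HS P B HB); auto; intros c' Hc'; apply IH; [lia|apply HP, Hc']. }
  destruct (Hsat k (le_n k) [] Hk (fun _ => d)) as [l [[] _]].
Qed.

(** * Skolemization in the witness expansion *)

Section WitnessExpansion.
Variables (D : Type) (d0 : D) (base : sym -> list D -> D).

Definition assign (rho : nat -> D) (x : nat) (d : D) : nat -> D :=
  fun y => if Nat.eqb y x then d else rho y.

(* Skolem symbols ignore their arguments and denote a witness for their index read with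
   all other variables at [d0]; this is faithful only for indices that are closed after
   instantiation, whence [rigid] and [strong_first] below. *)
Fixpoint interp (f : sym) (args : list D) {struct f} : D :=
  match f with
  | Sk (All x B) => epsilon (inhabits d0) (fun d => ~ holds (assign (fun _ => d0) x d) B)
  | Sk (Ex x B) => epsilon (inhabits d0) (fun d => holds (assign (fun _ => d0) x d) B)
  | Sk _ => d0
  | _ => base f args
  end
with tval (rho : nat -> D) (t : term) {struct t} : D :=
  match t with
  | Var n => rho n
  | App f args => interp f (map (tval rho) args)
  end
with holds (rho : nat -> D) (A : form) {struct A} : Prop :=
  match A with
  | Eq t u => tval rho t = tval rho u
  | Neg B => ~ holds rho B
  | And B C => holds rho B /\ holds rho C
  | Or B C => holds rho B \/ holds rho C
  | Imp B C => holds rho B -> holds rho C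
  | All x B => forall d, holds (assign rho x d) B
  | Ex x B => exists d, holds (assign rho x d) B
  end.

Lemma tval_teval rho t : tval rho t = teval interp rho t.
Proof.
  induction t as [n|f args IH] using term_nested_ind; simpl; f_equal.
  induction IH; simpl; f_equal; auto.
Qed.

Lemma tval_ext rho rho' t : (forall n, In n (tvars t) -> rho n = rho' n) ->
  tval rho t = tval rho' t.
Proof.
  induction t as [n|f args IH] using term_nested_ind; [intro H; apply H; left; auto|].
  rewrite tvars_App; intro H; cbn [tval]; f_equal; apply map_ext_in.
  intros a Ha; apply (proj1 (Forall_forall _ _) IH a Ha).
  intros n Hn; apply H, in_flat_map; eauto.
Qed.

Lemma tval_tsubst rho s t : tval rho (tsubst s t) = tval (fun n => tval rho (s n)) t.
Proof.
  induction t as [n|f args IH] using term_nested_ind; simpl; [auto|].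
  rewrite map_map; f_equal; apply map_ext_in.
  intros a Ha; apply (proj1 (Forall_forall _ _) IH a Ha).
Qed.

Lemma holds_ext_fv A : forall rho rho', (forall n, In n (fv_raw A) -> rho n = rho' n) ->
  (holds rho A <-> holds rho' A).
Proof.
  induction A; simpl; intros rho rho' H.
  1: rewrite (tval_ext rho rho' t), (tval_ext rho rho' u); [tauto| |];
       intros n Hn; apply H, in_app_iff; auto.
  1: rewrite (IHA rho rho' H); tauto.
  1-3: rewrite (IHA1 rho rho'), (IHA2 rho rho'); [tauto| |];
         intros n Hn; apply H, in_app_iff; auto.
  all: assert (Hx : forall d n, In n (fv_raw A) -> assign rho x d n = assign rho' x d n)
         by (intros d n Hn; unfold assign; destruct (Nat.eqb_spec n x); [auto|];
             apply H, filter_In; split; [auto|apply Bool.negb_true_iff, Nat.eqb_neq; auto]).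
  1: split; intros Hd d; [rewrite <- (IHA _ _ (Hx d))|rewrite (IHA _ _ (Hx d))]; auto.
  1: split; intros [d Hd]; exists d; [rewrite <- (IHA _ _ (Hx d))|rewrite (IHA _ _ (Hx d))]; auto.
Qed.

Lemma holds_ext A rho rho' : (forall n, rho n = rho' n) -> (holds rho A <-> holds rho' A).
Proof. intros H; apply holds_ext_fv; auto. Qed.

Lemma holds_fsubst_qf A s rho : quantifier_free A ->
  (holds rho (fsubst s A) <-> holds (fun n => tval rho (s n)) A).
Proof.
  revert s rho; induction A; simpl; intros s rho Q; try contradiction.
  1: rewrite !tval_tsubst; tauto.
  1: rewrite IHA; tauto.
  all: rewrite IHA1, IHA2; tauto.
Qed.

Definition rigid (t : term) : Prop := forall rho rho', tval rho t = tval rho' t.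

Lemma rigid_Sk A args : rigid (App (Sk A) args).
Proof. intros rho rho'; destruct A; reflexivity. Qed.

Definition rigid_or_var (s : nat -> term) : Prop := forall n, s n = Var n \/ rigid (s n).

Lemma rigid_or_var_upd s x t : rigid_or_var s -> (t = Var x \/ rigid t) ->
  rigid_or_var (upd s x t).
Proof. intros Hs Ht n; unfold upd; destruct (Nat.eqb_spec n x); subst; auto. Qed.

(* Substitution of variables and rigid terms cannot be captured by a binder. *)
Lemma holds_fsubst A s rho : rigid_or_var s ->
  (holds rho (fsubst s A) <-> holds (fun n => tval rho (s n)) A).
Proof.
  revert s rho; induction A; simpl; intros s rho Hs.
  1: rewrite !tval_tsubst; tauto.
  1: rewrite IHA; tauto.
  1-3: rewrite IHA1, IHA2; tauto.
  all: assert (Hx : forall d, holds (assign rho x d) (fsubst (upd s x (Var x)) A) <->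
                              holds (assign (fun n => tval rho (s n)) x d) A)
         by (intro d; rewrite IHA by (apply rigid_or_var_upd; auto);
             apply holds_ext; intro n; unfold upd, assign;
             destruct (Nat.eqb_spec n x) as [->|Hn]; [simpl; rewrite Nat.eqb_refl; auto|];
             destruct (Hs n) as [->|Hr]; [simpl; apply Nat.eqb_neq in Hn; rewrite Hn|]; auto).
  1: split; intros H d; apply Hx, H.
  1: split; intros [d H]; exists d; apply Hx, H.
Qed.

Lemma cnf_sound F rho : nnf F -> holds rho F ->
  forall c, In c (cnf F) -> exists l, In l c /\ lit_sat interp rho l.
Proof.
  revert rho; induction F; intros rho N H c Hc; simpl in *; try contradiction.
  1: destruct Hc as [<-|[]]; exists (Lit true t u); simpl; rewrite <- !tval_teval; auto.
  1: destruct F; try contradiction; destruct Hc as [<-|[]];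
       exists (Lit false t u); simpl; rewrite <- !tval_teval; auto.
  1: destruct N, H; apply in_app_or in Hc as [Hc|Hc]; eauto.
  destruct N as [N1 N2]; apply in_flat_map in Hc as [c1 [H1 [c2 [<- H2]]%in_map_iff]].
  destruct H as [H|H];
    [destruct (IHF1 rho N1 H c1 H1) as [l [Hl Hs]]|destruct (IHF2 rho N2 H c2 H2) as [l [Hl Hs]]];
    exists l; rewrite in_app_iff; auto.
Qed.

Lemma tval_upd rho env x t n :
  tval rho (upd env x t n) = assign (fun n => tval rho (env n)) x (tval rho t) n.
Proof. unfold upd, assign; destruct (Nat.eqb n x); reflexivity. Qed.

Definition polar (pos : bool) (P : Prop) : Prop := if pos then P else ~ P.

Lemma sk_sound_weak A : forall pos env k rho, weak_only pos A ->
  polar pos (holds (fun n => tval rho (env n)) A) -> holds rho (fst (sk pos env k A)).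
Proof.
  induction A; intros pos env k rho W H; simpl in W |- *.
  - destruct pos; simpl in *; rewrite !tval_tsubst; auto.
  - apply IHA; auto; destruct pos; simpl in *; [auto|apply NNPP, H].
  - sk_split IHA1 IHA2; destruct W, pos; simpl in *; [|apply not_and_or in H]; intuition.
  - sk_split IHA1 IHA2; destruct W, pos; simpl in *; intuition.
  - sk_split IHA1 IHA2; destruct W, pos; simpl in *;
      [apply imply_to_or in H|apply imply_to_and in H]; intuition.
  - destruct W as [-> W]; apply IHA; auto; simpl in *.
    rewrite (holds_ext _ _ _ (fun n => tval_upd rho env x (Var k) n)); apply H.
  - destruct W as [-> W]; apply IHA; auto; simpl in *; intro Hx; apply H; exists (rho k).
    rewrite <- (holds_ext _ _ _ (fun n => tval_upd rho env x (Var k) n)); apply Hx.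
Qed.

Lemma interp_Sk_All x B args :
  (exists d, ~ holds (assign (fun _ => d0) x d) B) ->
  ~ holds (assign (fun _ => d0) x (interp (Sk (All x B)) args)) B.
Proof. exact (epsilon_spec _ (fun d => ~ holds (assign (fun _ => d0) x d) B)). Qed.

Lemma interp_Sk_Ex x B args :
  (exists d, holds (assign (fun _ => d0) x d) B) ->
  holds (assign (fun _ => d0) x (interp (Sk (Ex x B)) args)) B.
Proof. exact (epsilon_spec _ (fun d => holds (assign (fun _ => d0) x d) B)). Qed.

Lemma Forall_rigid_upd env x t B : rigid t ->
  Forall (fun n => rigid (env n)) (filter (fun y => negb (Nat.eqb y x)) (fv_raw B)) ->
  Forall (fun n => rigid (upd env x t n)) (fv_raw B).
Proof.
  intros Ht Hfv; apply Forall_forall; intros n Hn; unfold upd; destruct (Nat.eqb_spec n x); [auto|].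
  apply (proj1 (Forall_forall _ _) Hfv), filter_In.
  rewrite Bool.negb_true_iff, Nat.eqb_neq; auto.
Qed.

Lemma holds_skolem_body env x B rho d : rigid_or_var env ->
  Forall (fun n => rigid (env n)) (filter (fun y => negb (Nat.eqb y x)) (fv_raw B)) ->
  (holds (assign (fun _ => d0) x d) (fsubst (upd env x (Var x)) B) <->
   holds (assign (fun n => tval rho (env n)) x d) B).
Proof.
  intros Henv Hfv; rewrite holds_fsubst by (apply rigid_or_var_upd; auto).
  apply holds_ext_fv; intros n Hn; rewrite tval_upd; unfold assign; simpl.
  rewrite Nat.eqb_refl; destruct (Nat.eqb_spec n x); [auto|].
  apply (proj1 (Forall_forall _ _) Hfv), filter_In.
  rewrite Bool.negb_true_iff, Nat.eqb_neq; auto.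
Qed.

Lemma sk_sound_strong_first A : forall pos env k rho, strong_first pos A ->
  rigid_or_var env -> Forall (fun n => rigid (env n)) (fv_raw A) ->
  polar pos (holds (fun n => tval rho (env n)) A) -> holds rho (fst (sk pos env k A)).
Proof.
  induction A; intros pos env k rho W Henv Hfv H; simpl in W, Hfv.
  - apply sk_sound_weak; simpl; auto.
  - apply IHA; auto; destruct pos; simpl in *; [auto|apply NNPP, H].
  - apply Forall_app in Hfv as [Hfv1 Hfv2]; simpl; sk_split IHA1 IHA2.
    destruct W, pos; simpl in *; [|apply not_and_or in H]; intuition.
  - apply Forall_app in Hfv as [Hfv1 Hfv2]; simpl; sk_split IHA1 IHA2.
    destruct W, pos; simpl in *; intuition.
  - apply Forall_app in Hfv as [Hfv1 Hfv2]; simpl; sk_split IHA1 IHA2.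
    destruct W, pos; simpl in *; [apply imply_to_or in H|apply imply_to_and in H]; intuition.
  - destruct pos; [apply sk_sound_weak; simpl; auto|].
    simpl; apply IHA;
      [auto|apply rigid_or_var_upd; auto using rigid_Sk
      |apply Forall_rigid_upd; auto using rigid_Sk|].
    simpl; rewrite (holds_ext _ _ _ (fun n => tval_upd rho env _ _ n)).
    rewrite <- (holds_skolem_body env x A rho _ Henv Hfv).
    apply (interp_Sk_All _ _ []); apply not_all_ex_not in H as [d Hd]; exists d.
    rewrite (holds_skolem_body env x A rho _ Henv Hfv); exact Hd.
  - destruct pos; [|apply sk_sound_weak; simpl; auto].
    simpl; apply IHA;
      [auto|apply rigid_or_var_upd; auto using rigid_Sk
      |apply Forall_rigid_upd; auto using rigid_Sk|].
    simpl; rewrite (holds_ext _ _ _ (fun n => tval_upd rho env _ _ n)).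
    rewrite <- (holds_skolem_body env x A rho _ Henv Hfv).
    apply (interp_Sk_Ex _ _ []); destruct H as [d Hd]; exists d.
    rewrite (holds_skolem_body env x A rho _ Henv Hfv); exact Hd.
Qed.

Lemma cnf_sk_sat A : fv_raw A = [] -> strong_first true A -> holds (fun _ => d0) A ->
  forall c, In c (cnf_sk A) -> clause_sat interp c.
Proof.
  intros Hcl W H c Hc rho.
  apply (cnf_sound _ rho (sk_nnf A true Var (S (maxvar A)))); [|exact Hc].
  apply sk_sound_strong_first; auto.
  - intro n; left; reflexivity.
  - rewrite Hcl; constructor.
  - apply (holds_ext_fv A (fun _ => d0)); [rewrite Hcl; contradiction|exact H].
Qed.

Definition zeroD : D := base SZero [].
Definition succD (d : D) : D := base SSucc [d].

Fixpoint mulD (m : nat) (d : D) : D :=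
  match m with
  | 0 => zeroD
  | S m' => match m' with 0 => d | _ => base SPlus [d; mulD m' d] end
  end.

Lemma tval_mult rho m t : tval rho (mult m t) = mulD m (tval rho t).
Proof. induction m as [|[|m] IH]; simpl in *; try rewrite IH; reflexivity. Qed.

Lemma tval_sN rho k t : tval rho (sN k t) = Nat.iter k succD (tval rho t).
Proof. induction k as [|k IH]; simpl; [|rewrite IH]; reflexivity. Qed.

Lemma holds_neg_C rho m : (exists a b, mulD m a = mulD m b /\ a <> b) -> holds rho (Neg (C_ m)).
Proof.
  intros [a [b [Hab Hne]]] H; apply Hne; specialize (H a b); simpl in H.
  rewrite !tval_mult in H; apply H, Hab.
Qed.

Lemma holds_neg_D rho m k :
  (exists a b, Nat.iter k succD (mulD m a) = mulD m b) -> holds rho (Neg (D_ m k)).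
Proof.
  intros [a [b Hab]] H; apply (H a b); simpl.
  rewrite tval_sN, !tval_mult; exact Hab.
Qed.

Section OpenInduction.
Hypothesis open_induction : forall A x rho, quantifier_free A ->
  holds (assign rho x zeroD) A ->
  (forall d, holds (assign rho x d) A -> holds (assign rho x (succD d)) A) ->
  forall d, holds (assign rho x d) A.

Lemma holds_Ind x A rho : quantifier_free A -> holds rho (Ind x A).
Proof.
  intros Q [H0 HS] d; apply open_induction; auto.
  - rewrite holds_fsubst_qf in H0 by exact Q.
    rewrite <- (holds_ext _ _ _ (fun n => tval_upd rho Var x zero n)); exact H0.
  - intros e He; specialize (HS e He); rewrite holds_fsubst_qf in HS by exact Q.
    revert HS; apply holds_ext; intro n; rewrite tval_upd; unfold assign; simpl.
    rewrite Nat.eqb_refl; destruct (Nat.eqb n x); reflexivity.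
Qed.

Lemma IND_sat_preserving G : (forall A, G A -> quantifier_free A) -> sat_preserving (IND G) interp.
Proof.
  intros HG P B [phi [x [ts [Hphi [Hts ->]]]]] _ c Hc.
  apply HG in Hphi.
  assert (Q := fsubst_qf phi (fun y => if Nat.eqb y x then Var x else ts y) Hphi).
  apply cnf_sk_sat in Hc; auto.
  - apply fv_raw_Ind, fv_raw_instance; auto.
    intros y Hy Hyx; apply (Hts y Hy Hyx).
  - apply strong_first_Ind, Q.
  - apply holds_Ind, Q.
Qed.

Lemma not_refutes_T'_plus A :
  (forall B, In B theory_T' -> holds (fun _ => d0) B) ->
  fv_raw A = [] -> strong_first true A -> holds (fun _ => d0) A ->
  forall S, sound S ->
  ~ refutes (sys_union S (IND (Open (cnf_sk_theory (theory_T' ++ [A])))))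
            (cnf_sk_theory (theory_T' ++ [A])).
Proof.
  intros HT Hcl W HA S HS; apply (not_refutes_of_model _ _ d0 interp).
  - apply sat_preserving_union; [apply sound_sat_preserving, HS|].
    apply IND_sat_preserving; intros B [Q _]; exact Q.
  - intros c Hc; apply in_flat_map in Hc as [B [HB Hc]].
    apply in_app_or in HB as [HB|[<-|[]]]; [|apply cnf_sk_sat in Hc; auto].
    destruct (theory_T'_shape B HB); apply cnf_sk_sat in Hc; auto.
Qed.
End OpenInduction.
End WitnessExpansion.

Arguments assign {D}.
Arguments interp {D}.
Arguments tval {D}.
Arguments holds {D}.
Arguments zeroD {D}.
Arguments succD {D}.
Arguments mulD {D}.

(** * The chain model *)

Record triple : Type := Triple { ofs : Z; lvl : Z; tor : Z }.

Section ChainModel.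
Local Open Scope Z_scope.
Variable m : nat.
Hypothesis m_pos : (0 < m)%nat.
Let M : Z := Z.of_nat m.
Let M_pos : 0 < M.
Proof. unfold M; lia. Qed.

(* [Triple (k * M) 0 0] is the natural number k; [Triple u j t] with [j > 0] is the element
   of level j, offset u and torsion t ∈ [0, M) of the nonstandard part. *)
Definition wf_triple (v : triple) : Prop :=
  (0 < lvl v /\ 0 <= tor v < M) \/ (lvl v = 0 /\ tor v = 0 /\ 0 <= ofs v /\ (M | ofs v)).

Definition is_elt (v : triple) : bool :=
  (((0 <? lvl v) && (0 <=? tor v) && (tor v <? M)) ||
  ((lvl v =? 0) && (tor v =? 0) && (0 <=? ofs v) && (ofs v mod M =? 0)))%bool.

Lemma is_elt_spec v : is_elt v = true <-> wf_triple v.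
Proof.
  unfold is_elt, wf_triple.
  rewrite Bool.orb_true_iff, !Bool.andb_true_iff, !Z.ltb_lt, !Z.leb_le, !Z.eqb_eq,
    Z.mod_divide by lia.
  tauto.
Qed.

Definition elt : Type := {v : triple | is_elt v = true}.
Definition elt_val (d : elt) : triple := proj1_sig d.
Coercion elt_val : elt >-> triple.

Lemma elt_wf (d : elt) : wf_triple d.
Proof. apply is_elt_spec, (proj2_sig d). Qed.

Lemma elt_ext (d e : elt) : ofs d = ofs e -> lvl d = lvl e -> tor d = tor e -> d = e.
Proof.
  destruct d as [[u j t] Hd], e as [[u' j' t'] He]; simpl; intros <- <- <-.
  f_equal; apply UIP_dec, Bool.bool_dec.
Qed.

Lemma tor_range (d : elt) : 0 <= tor d < M.
Proof. destruct (elt_wf d); lia. Qed.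

Lemma lvl_nonneg (d : elt) : 0 <= lvl d.
Proof. destruct (elt_wf d); lia. Qed.

Definition tsucc (v : triple) : triple := Triple (ofs v + M) (lvl v) (tor v).
Definition tpred (v : triple) : triple :=
  if ((ofs v =? 0) && (lvl v =? 0))%bool then v else Triple (ofs v - M) (lvl v) (tor v).
Definition tadd (v w : triple) : triple :=
  Triple (ofs v + ofs w) (lvl v + lvl w) ((tor v + tor w) mod M).

Lemma wf_zero : wf_triple (Triple 0 0 0).
Proof. right; simpl; repeat split; auto using Z.divide_0_r; lia. Qed.

Lemma wf_tsucc v : wf_triple v -> wf_triple (tsucc v).
Proof.
  intros [H|[Hj [Ht [Hu Hd]]]]; [left; exact H|right; simpl].
  repeat split; auto using Z.divide_add_r, Z.divide_refl; lia.
Qed.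

Lemma wf_tpred v : wf_triple v -> wf_triple (tpred v).
Proof.
  unfold tpred; destruct ((ofs v =? 0) && (lvl v =? 0))%bool eqn:E; [auto|].
  rewrite Bool.andb_false_iff, !Z.eqb_neq in E.
  intros [H|[Hj [Ht [Hu Hd]]]]; [left; exact H|right; simpl].
  assert (M <= ofs v) by (apply Z.divide_pos_le; auto; lia).
  repeat split; auto using Z.divide_sub_r, Z.divide_refl; lia.
Qed.

Lemma wf_tadd v w : wf_triple v -> wf_triple w -> wf_triple (tadd v w).
Proof.
  unfold tadd; pose proof (Z.mod_pos_bound (tor v + tor w) M M_pos).
  intros [Hv|[Hjv [Htv [Huv Hdv]]]] [Hw|[Hjw [Htw [Huw Hdw]]]]; unfold wf_triple; simpl;
    try (left; lia).
  right; rewrite Htv, Htw; repeat split; auto using Z.divide_add_r; lia.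
Qed.

Definition el_zero : elt := exist _ _ (proj2 (is_elt_spec _) wf_zero).
Definition el_succ (d : elt) : elt :=
  exist _ _ (proj2 (is_elt_spec _) (wf_tsucc _ (elt_wf d))).
Definition el_pred (d : elt) : elt :=
  exist _ _ (proj2 (is_elt_spec _) (wf_tpred _ (elt_wf d))).
Definition el_add (d e : elt) : elt :=
  exist _ _ (proj2 (is_elt_spec _) (wf_tadd _ _ (elt_wf d) (elt_wf e))).

Definition el_base (f : sym) (args : list elt) : elt :=
  match f, args with
  | SSucc, [a] => el_succ a
  | SPred, [a] => el_pred a
  | SPlus, [a; b] => el_add a b
  | _, _ => el_zero
  end.

Lemma el_succ_coords d :
  ofs (el_succ d) = ofs d + M /\ lvl (el_succ d) = lvl d /\ tor (el_succ d) = tor d.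
Proof. repeat split. Qed.

Lemma el_add_coords d e : ofs (el_add d e) = ofs d + ofs e /\
  lvl (el_add d e) = lvl d + lvl e /\ tor (el_add d e) = (tor d + tor e) mod M.
Proof. repeat split. Qed.

Lemma el_eq_zero (d : elt) : d = el_zero <-> ofs d = 0 /\ lvl d = 0.
Proof.
  split; [intros ->; auto|intros [Hu Hj]].
  apply elt_ext; auto; destruct (elt_wf d); simpl; lia.
Qed.

Lemma el_pred_nonzero (d : elt) : d <> el_zero ->
  ofs (el_pred d) = ofs d - M /\ lvl (el_pred d) = lvl d /\ tor (el_pred d) = tor d.
Proof.
  rewrite el_eq_zero; intro H; simpl; unfold tpred.
  destruct ((ofs d =? 0) && (lvl d =? 0))%bool eqn:E; [|auto].
  rewrite Bool.andb_true_iff, !Z.eqb_eq in E; tauto.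
Qed.

Lemma Zmod_add_cancel_l a b c : (a + b) mod M = (a + c) mod M <-> b mod M = c mod M.
Proof.
  split; intro H; [|rewrite <- Zplus_mod_idemp_r, H, Zplus_mod_idemp_r; reflexivity].
  replace b with (a + b - a) by ring; replace c with (a + c - a) by ring.
  rewrite <- Zminus_mod_idemp_l, H, Zminus_mod_idemp_l; reflexivity.
Qed.

Lemma el_succ_neq_zero d : el_zero <> el_succ d.
Proof.
  intro H; symmetry in H; apply el_eq_zero in H; simpl in H.
  destruct (elt_wf d); lia.
Qed.

Lemma el_pred_zero : el_pred el_zero = el_zero.
Proof. apply elt_ext; reflexivity. Qed.

Lemma el_pred_succ d : el_pred (el_succ d) = d.
Proof.
  destruct (el_pred_nonzero (el_succ d) (not_eq_sym (el_succ_neq_zero d))) as [Hu [Hj Ht]].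
  apply elt_ext; [rewrite Hu|rewrite Hj|rewrite Ht]; simpl; lia.
Qed.

Lemma el_succ_pred d : d <> el_zero -> d = el_succ (el_pred d).
Proof.
  intro H; destruct (el_pred_nonzero d H) as [Hu [Hj Ht]].
  apply elt_ext; cbn [elt_val el_succ proj1_sig tsucc ofs lvl tor]; lia.
Qed.

Lemma el_add_zero d : el_add d el_zero = d.
Proof.
  pose proof (tor_range d); apply elt_ext; simpl; try lia.
  rewrite Z.add_0_r; apply Z.mod_small; lia.
Qed.

Lemma el_add_succ d e : el_add d (el_succ e) = el_succ (el_add d e).
Proof. apply elt_ext; simpl; lia. Qed.

Lemma el_add_comm d e : el_add d e = el_add e d.
Proof. apply elt_ext; simpl; [lia|lia|rewrite Z.add_comm; reflexivity]. Qed.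

Lemma el_add_assoc d e f : el_add (el_add d e) f = el_add d (el_add e f).
Proof.
  apply elt_ext; simpl; [lia|lia|].
  rewrite Zplus_mod_idemp_l, Zplus_mod_idemp_r, Z.add_assoc; reflexivity.
Qed.

Lemma el_add_cancel d e f : el_add d e = el_add d f -> e = f.
Proof.
  intro H; apply (f_equal elt_val) in H; simpl in H; injection H as Hu Hj Ht.
  apply elt_ext; [lia|lia|].
  apply Zmod_add_cancel_l in Ht; rewrite !Z.mod_small in Ht; auto using tor_range.
Qed.

Lemma chain_models_T' A : In A theory_T' -> holds el_zero el_base (fun _ => el_zero) A.
Proof.
  intro HA; repeat (destruct HA as [<-|HA]; [simpl; unfold assign; simpl; intros|]).
  - apply el_succ_neq_zero.
  - apply el_pred_zero.
  - apply el_pred_succ.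
  - apply el_add_zero.
  - apply el_add_succ.
  - apply el_succ_pred; auto.
  - apply el_add_comm.
  - apply el_add_assoc.
  - eapply el_add_cancel; eauto.
  - contradiction.
Qed.

Definition bounded_by (N : Z) (d : elt) : Prop := Z.abs (ofs d) <= N /\ Z.abs (lvl d) <= N.

Definition eventually (P : elt -> Prop) : Prop := exists N, forall d, ~ bounded_by N d -> P d.

Lemma eventually_mono (P Q : elt -> Prop) :
  (forall d, P d -> Q d) -> eventually P -> eventually Q.
Proof. intros H [N HN]; exists N; auto. Qed.

Lemma eventually_and (P Q : elt -> Prop) :
  eventually P -> eventually Q -> eventually (fun d => P d /\ Q d).
Proof.
  intros [N1 H1] [N2 H2]; exists (Z.max N1 N2); intros d Hd; split;
    [apply H1|apply H2]; intros [? ?]; apply Hd; split; lia.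
Qed.

Definition affine_at (F : elt -> elt) (k e1 e2 e3 : Z) (d : elt) : Prop :=
  ofs (F d) = k * ofs d + e1 /\ lvl (F d) = k * lvl d + e2 /\
  tor (F d) = (k * tor d + e3) mod M.

Definition eventually_affine (F : elt -> elt) : Prop :=
  exists k e1 e2 e3, eventually (affine_at F k e1 e2 e3).

Definition eventually_constant (P : elt -> Prop) : Prop :=
  exists B : Prop, eventually (fun d => P d <-> B).

Lemma affine_ext (F G : elt -> elt) :
  eventually (fun d => F d = G d) -> eventually_affine G -> eventually_affine F.
Proof.
  intros HFG [k [e1 [e2 [e3 HG]]]]; exists k, e1, e2, e3.
  generalize (eventually_and _ _ HFG HG); apply eventually_mono.
  intros d [HF H]; unfold affine_at; rewrite HF; exact H.
Qed.

Lemma affine_const (F : elt -> elt) c : (forall d, F d = c) -> eventually_affine F.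
Proof.
  intro H; exists 0, (ofs c), (lvl c), (tor c), 0; intros d _; unfold affine_at.
  rewrite H, !Z.mul_0_l, !Z.add_0_l, Z.mod_small by apply tor_range; lia.
Qed.

Lemma affine_id : eventually_affine (fun d => d).
Proof.
  exists 1, 0, 0, 0, 0; intros d _; unfold affine_at.
  rewrite !Z.mul_1_l, !Z.add_0_r, Z.mod_small by apply tor_range; lia.
Qed.

Lemma affine_succ F : eventually_affine F -> eventually_affine (fun d => el_succ (F d)).
Proof.
  intros [k [e1 [e2 [e3 HF]]]]; exists k, (e1 + M), e2, e3.
  revert HF; apply eventually_mono; unfold affine_at; simpl; intros d H; lia.
Qed.

Lemma affine_add F G : eventually_affine F -> eventually_affine G ->
  eventually_affine (fun d => el_add (F d) (G d)).
Proof.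
  intros [k [e1 [e2 [e3 HF]]]] [k' [e1' [e2' [e3' HG]]]].
  exists (k + k'), (e1 + e1'), (e2 + e2'), (e3 + e3').
  generalize (eventually_and _ _ HF HG); apply eventually_mono; unfold affine_at; simpl.
  intros d [[H1 [H2 H3]] [H1' [H2' H3']]]; repeat split; [lia|lia|].
  rewrite H3, H3', <- Zplus_mod; f_equal; ring.
Qed.

Lemma abs_le_of_mul a u c : a <> 0 -> a * u = c -> Z.abs u <= Z.abs c.
Proof. intros Ha <-; rewrite Z.abs_mul; nia. Qed.

(* Different slopes can only meet in a bounded region. *)
Lemma eq_eventually_constant F G : eventually_affine F -> eventually_affine G ->
  eventually_constant (fun d => F d = G d).
Proof.
  intros [k [e1 [e2 [e3 [N HF]]]]] [k' [e1' [e2' [e3' [N' HG]]]]].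
  exists (k = k' /\ e1 = e1' /\ e2 = e2' /\ e3 mod M = e3' mod M).
  exists (Z.abs N + Z.abs N' + Z.abs (e1' - e1) + Z.abs (e2' - e2)); intros d Hd.
  destruct (HF d) as [H1 [H2 H3]]; [intros [? ?]; apply Hd; split; lia|].
  destruct (HG d) as [H1' [H2' H3']]; [intros [? ?]; apply Hd; split; lia|].
  split.
  - intro E; rewrite E in H1, H2, H3; rewrite H3 in H3'.
    destruct (Z.eq_dec k k') as [<-|Hk].
    + repeat split; [lia|lia|apply (Zmod_add_cancel_l (k * tor d)); exact H3'].
    + exfalso; apply Hd.
      assert (Hu : (k - k') * ofs d = e1' - e1) by lia.
      assert (Hj : (k - k') * lvl d = e2' - e2) by lia.
      apply abs_le_of_mul in Hu, Hj; try lia; split; lia.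
  - intros [<- [<- [<- He]]]; apply elt_ext; [lia|lia|].
    rewrite H3, H3'; apply Zmod_add_cancel_l, He.
Qed.

Lemma affine_pred F : eventually_affine F -> eventually_affine (fun d => el_pred (F d)).
Proof.
  intro HF.
  destruct (eq_eventually_constant F (fun _ => el_zero) HF
             (affine_const _ el_zero (fun _ => eq_refl)))
    as [B HB].
  destruct (classic B) as [Hz|Hnz].
  - apply (affine_ext _ (fun _ => el_zero)); [|apply (affine_const _ el_zero); reflexivity].
    revert HB; apply eventually_mono; intros d HB; rewrite (proj2 HB Hz); apply el_pred_zero.
  - destruct HF as [k [e1 [e2 [e3 HF]]]]; exists k, (e1 - M), e2, e3.
    generalize (eventually_and _ _ HF HB); apply eventually_mono; unfold affine_at.
    intros d [[H1 [H2 H3]] HB']; destruct (el_pred_nonzero (F d)) as [P1 [P2 P3]];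
      [intro E; apply Hnz, HB', E|].
    rewrite P1, P2, P3; lia.
Qed.

Lemma term_affine (rho : nat -> elt) x t :
  eventually_affine (fun d => tval el_zero el_base (assign rho x d) t).
Proof.
  induction t as [n|f args IH] using term_nested_ind.
  - unfold assign; simpl; destruct (Nat.eqb n x);
      [apply affine_id|apply (affine_const _ (rho n)); reflexivity].
  - destruct f as [| | | |A]; simpl.
    5: apply (affine_const _ (interp el_zero el_base (Sk A) [])); intro d; destruct A; reflexivity.
    all: destruct args as [|a [|b [|c args]]]; simpl;
      try (apply (affine_const _ el_zero); reflexivity).
    + inversion IH; apply affine_succ; auto.
    + inversion IH; apply affine_pred; auto.
    + inversion IH as [|? ? Ha IH']; inversion IH'; apply affine_add; auto.
Qed.

Lemma eventually_constant_op (op : Prop -> Prop -> Prop) (P Q : elt -> Prop) :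
  (forall A A' B B', (A <-> A') -> (B <-> B') -> (op A B <-> op A' B')) ->
  eventually_constant P -> eventually_constant Q ->
  eventually_constant (fun d => op (P d) (Q d)).
Proof.
  intros Hop [B1 H1] [B2 H2]; exists (op B1 B2).
  generalize (eventually_and _ _ H1 H2); apply eventually_mono; intros d [? ?]; auto.
Qed.

Lemma form_eventually_constant (rho : nat -> elt) x A : quantifier_free A ->
  eventually_constant (fun d => holds el_zero el_base (assign rho x d) A).
Proof.
  induction A; simpl; intro Q; try contradiction.
  - apply eq_eventually_constant; apply term_affine.
  - exact (eventually_constant_op (fun A _ => ~ A) _ _ ltac:(intros; tauto) (IHA Q) (IHA Q)).
  - exact (eventually_constant_op and _ _ ltac:(intros; tauto) (IHA1 (proj1 Q)) (IHA2 (proj2 Q))).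
  - exact (eventually_constant_op or _ _ ltac:(intros; tauto) (IHA1 (proj1 Q)) (IHA2 (proj2 Q))).
  - exact (eventually_constant_op (fun A B => A -> B) _ _ ltac:(intros; tauto)
             (IHA1 (proj1 Q)) (IHA2 (proj2 Q))).
Qed.

Definition std (k : nat) : elt := Nat.iter k el_succ el_zero.

Lemma std_coords k : ofs (std k) = Z.of_nat k * M /\ lvl (std k) = 0 /\ tor (std k) = 0.
Proof.
  induction k as [|k IH]; [simpl; lia|].
  change (std (S k)) with (el_succ (std k)).
  destruct (el_succ_coords (std k)) as [S1 [S2 S3]]; rewrite S1, S2, S3; lia.
Qed.

Lemma elt_std (d : elt) : lvl d = 0 -> exists k, d = std k.
Proof.
  intro Hj; destruct (elt_wf d) as [|[_ [Ht [Hu [q Hq]]]]]; [lia|].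
  exists (Z.to_nat q); destruct (std_coords (Z.to_nat q)) as [S1 [S2 S3]].
  apply elt_ext; lia.
Qed.

Lemma std_unbounded N : ~ bounded_by N (std (Z.to_nat (Z.abs N) + 1)).
Proof.
  destruct (std_coords (Z.to_nat (Z.abs N) + 1)) as [S1 _]; intros [H _]; nia.
Qed.

Lemma iter_pred_coords (d : elt) k : 0 < lvl d ->
  ofs (Nat.iter k el_pred d) = ofs d - Z.of_nat k * M /\
  lvl (Nat.iter k el_pred d) = lvl d /\ tor (Nat.iter k el_pred d) = tor d.
Proof.
  intro Hj; induction k as [|k IH]; [simpl; lia|].
  destruct (el_pred_nonzero (Nat.iter k el_pred d)) as [P1 [P2 P3]];
    [rewrite el_eq_zero; lia|].
  simpl Nat.iter; rewrite P1, P2, P3; lia.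
Qed.

Lemma iter_pred_unbounded (d : elt) N : 0 < lvl d ->
  ~ bounded_by N (Nat.iter (Z.to_nat (Z.abs (ofs d) + Z.abs N) + 1) el_pred d).
Proof.
  intro Hj; destruct (iter_pred_coords d (Z.to_nat (Z.abs (ofs d) + Z.abs N) + 1) Hj)
    as [P1 _]; intros [H _]; nia.
Qed.

Lemma eventually_constant_induction (Q : elt -> Prop) : eventually_constant Q ->
  Q el_zero -> (forall d, Q d -> Q (el_succ d)) -> forall d, Q d.
Proof.
  intros [B [N HN]] H0 HS.
  assert (Hstd : forall k, Q (std k)) by (induction k; simpl; auto).
  destruct (classic B) as [HB|HB].
  - intro d; destruct (Z.eq_dec (lvl d) 0) as [Hj|Hj].
    + destruct (elt_std d Hj) as [k ->]; auto.
    + assert (Hlvl : 0 < lvl d) by (pose proof (lvl_nonneg d); lia).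
      apply NNPP; intro Hd.
      assert (Hdown : forall k, ~ Q (Nat.iter k el_pred d)).
      { induction k as [|k IH]; [exact Hd|intro Hq; apply IH].
        rewrite (el_succ_pred (Nat.iter k el_pred d)); [apply HS, Hq|].
        rewrite el_eq_zero; destruct (iter_pred_coords d k Hlvl); lia. }
      apply (Hdown (Z.to_nat (Z.abs (ofs d) + Z.abs N) + 1)%nat), HN, HB.
      apply iter_pred_unbounded, Hlvl.
  - exfalso; apply HB, (HN _ (std_unbounded N)), Hstd.
Qed.

Lemma chain_open_induction A x rho : quantifier_free A ->
  holds el_zero el_base (assign rho x (zeroD el_base)) A ->
  (forall d, holds el_zero el_base (assign rho x d) A ->
             holds el_zero el_base (assign rho x (succD el_base d)) A) ->
  forall d, holds el_zero el_base (assign rho x d) A.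
Proof.
  intro Q.
  apply (eventually_constant_induction (fun d => holds el_zero el_base (assign rho x d) A)).
  apply form_eventually_constant, Q.
Qed.

Lemma mulD_coords k d : (1 <= k)%nat ->
  ofs (mulD el_base k d) = Z.of_nat k * ofs d /\
  lvl (mulD el_base k d) = Z.of_nat k * lvl d /\
  tor (mulD el_base k d) = (Z.of_nat k * tor d) mod M.
Proof.
  intro Hk; induction k as [|[|k] IH]; [lia| |].
  - change (mulD el_base 1 d) with d; change (Z.of_nat 1) with 1.
    rewrite !Z.mul_1_l, Z.mod_small by apply tor_range; auto.
  - destruct IH as [I1 [I2 I3]]; [lia|].
    change (mulD el_base (S (S k)) d) with (el_add d (mulD el_base (S k) d)).
    destruct (el_add_coords d (mulD el_base (S k) d)) as [A1 [A2 A3]].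
    rewrite A1, A2, A3, I1, I2, I3, Zplus_mod_idemp_r; split; [lia|split; [lia|f_equal; lia]].
Qed.

Lemma iter_succ_coords k d :
  ofs (Nat.iter k (succD el_base) d) = ofs d + Z.of_nat k * M /\
  lvl (Nat.iter k (succD el_base) d) = lvl d /\ tor (Nat.iter k (succD el_base) d) = tor d.
Proof.
  induction k as [|k IH]; [simpl; lia|].
  change (Nat.iter (S k) (succD el_base) d) with (el_succ (Nat.iter k (succD el_base) d)).
  destruct (el_succ_coords (Nat.iter k (succD el_base) d)) as [S1 [S2 S3]].
  rewrite S1, S2, S3; lia.
Qed.

Lemma wf_level1 u t : wf_triple (Triple u 1 (t mod M)).
Proof. left; simpl; split; [lia|apply Z.mod_pos_bound, M_pos]. Qed.

Definition level1 (u t : Z) : elt := exist _ _ (proj2 (is_elt_spec _) (wf_level1 u t)).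

Lemma chain_mul_not_injective : (1 < m)%nat ->
  exists a b, mulD el_base m a = mulD el_base m b /\ a <> b.
Proof.
  intro Hm; exists (level1 0 0), (level1 0 1).
  destruct (mulD_coords m (level1 0 0)) as [A1 [A2 A3]]; [lia|].
  destruct (mulD_coords m (level1 0 1)) as [B1 [B2 B3]]; [lia|].
  assert (HM : 1 < M) by (unfold M; lia).
  simpl in *; rewrite Zmod_0_l, Z.mul_0_r, Zmod_0_l in A3.
  rewrite (Z.mod_small 1), Z.mul_1_r, Z_mod_same_full in B3 by lia; split.
  - apply elt_ext; lia.
  - intro E; apply (f_equal (fun d : elt => tor d)) in E; simpl in E.
    rewrite Zmod_0_l, Z.mod_small in E; lia.
Qed.

Lemma chain_succ_iter_mul k :
  exists a b, Nat.iter k (succD el_base) (mulD el_base m a) = mulD el_base m b.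
Proof.
  exists (level1 0 0), (level1 (Z.of_nat k) 0).
  destruct (mulD_coords m (level1 0 0)) as [A1 [A2 A3]]; [lia|].
  destruct (mulD_coords m (level1 (Z.of_nat k) 0)) as [B1 [B2 B3]]; [lia|].
  destruct (iter_succ_coords k (mulD el_base m (level1 0 0))) as [I1 [I2 I3]].
  apply elt_ext; rewrite ?I1, ?I2, ?I3; simpl in *; unfold M in *; lia.
Qed.
End ChainModel.

Theorem theorem4 :
  forall (m n : nat), 0 < n -> n < m ->
  forall (S : sat_system), sound S ->
  forall (C : clause_set), C = X_ m \/ C = Y_ m n ->
    ~ refutes (sys_union S (IND (Open C))) C.
Proof.
  intros m n Hn Hm S HS C HC.
  assert (Hpos : 0 < m) by lia.
  destruct HC as [-> | ->];
    apply (not_refutes_T'_plus _ _ _ (chain_open_induction m Hpos));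
    auto using chain_models_T'; try (simpl; tauto).
  - apply fv_raw_C.
  - apply holds_neg_C, chain_mul_not_injective; lia.
  - apply fv_raw_D.
  - apply holds_neg_D, chain_succ_iter_mul.
Qed.
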